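(* Let $n \ge 1$, $1 \le q \le n$, $S \subseteq B_n$, $r \in [0:n-1]$ and $b \in \{0,1\}$ such that $1 \le |S(r,b)| \le |S(r,1-b)|$. Then $$m_q(S) \le m_q(S(r,1-b)) + m_q(S(r,b)) + m_{q-1}(S(r,b)).$$
   Context: $B_n = \{0,1\}^n$ with coordinates $x = (x_{n-1},\ldots,x_0)$. For $S \subseteq B_n$, $r \in [0:n-1]$, $c \in \{0,1\}$: $S(r,c) = \{x \in S : x_r = c\}$. A $q$-dimensional subcube of $B_n$ is a set $\{x \in B_n : x_i = b(i) \text{ for all } i \in Q\}$ with $Q \subseteq [0:n-1]$, $|Q| = n-q$, $b: Q \to \{0,1\}$. $m_q(T)$ denotes the number of $q$-dimensional subcubes of $B_n$ contained in $T \subseteq B_n$ (for $q = 0$ this is $|T|$). *)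

From mathcomp Require Import all_boot all_order.
Set Implicit Arguments. Unset Strict Implicit. Unset Printing Implicit Defensive.

Definition Bn (n : nat) := {ffun 'I_n -> bool}.

Definition slice n (S : {set Bn n}) (r : 'I_n) (c : bool) : {set Bn n} :=
  [set x in S | x r == c].

Definition cube n (Q : {set 'I_n}) (b : {ffun 'I_n -> bool}) : {set Bn n} :=
  [set x : Bn n | [forall i in Q, x i == b i]].

Definition is_subcube n (q : nat) (C : {set Bn n}) : bool :=
  [exists Q : {set 'I_n}, exists b : {ffun 'I_n -> bool},
     (#|Q| == n - q) && (C == cube Q b)].

Definition m n (q : nat) (T : {set Bn n}) : nat :=
  #|[set C : {set Bn n} | is_subcube q C && (C \subset T)]|.

(* A q-subcube of S either lies in one of the slices S(r,0), S(r,1) or leaves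
   coordinate r free.  In the latter case fixing x_r = b yields a
   (q-1)-subcube of S(r,b), and the cube is recovered from this half by
   forgetting coordinate r, so these cubes are counted by m_{q-1}(S(r,b)). *)

From mathcomp Require Import all_boot all_order.
From mathcomp Require Import zify.

Set Implicit Arguments.
Unset Strict Implicit.
Unset Printing Implicit Defensive.

Section CoordinateSlices.

Variables (n : nat) (r : 'I_n).

Definition half (c : bool) : {set Bn n} := [set x : Bn n | x r == c].

Definition set_coord (c : bool) (x : Bn n) : Bn n :=
  [ffun i => if i == r then c else x i].

Definition subcubes (q : nat) (T : {set Bn n}) : {set {set Bn n}} :=
  [set C | is_subcube q C && (C \subset T)].

Definition straddling (q : nat) (S : {set Bn n}) (c : bool) :
  {set {set Bn n}} :=
  [set C in subcubes q S | ~~ (C \subset half c) && ~~ (C \subset half (~~ c))].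

Lemma set_coordE c x i : set_coord c x i = if i == r then c else x i.
Proof. by rewrite /set_coord ffunE. Qed.

Lemma sliceE (S : {set Bn n}) (c : bool) : slice S r c = S :&: half c.
Proof. by apply/setP => x; rewrite !inE. Qed.

Lemma cube_sub_half (Q : {set 'I_n}) (b : {ffun 'I_n -> bool}) :
  r \in Q -> cube Q b \subset half (b r).
Proof.
by move=> rQ; apply/subsetP => x; rewrite !inE => /forallP/(_ r); rewrite rQ.
Qed.

Lemma mem_cube_set_coord (Q : {set 'I_n}) (b : {ffun 'I_n -> bool}) c x :
  r \notin Q -> (set_coord c x \in cube Q b) = (x \in cube Q b).
Proof.
move=> rQ; rewrite !inE; apply: eq_forallb => i; rewrite set_coordE.
by case: (i =P r) => // ->; rewrite (negbTE rQ).
Qed.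

Lemma cubeI_half (Q : {set 'I_n}) (b : {ffun 'I_n -> bool}) c :
  r \notin Q -> cube Q b :&: half c = cube (r |: Q) (set_coord c b).
Proof.
move=> rQ; apply/setP => x; rewrite !inE.
apply/andP/forallP => [[/forallP xQ xr] i | xQr].
- rewrite in_setU1 set_coordE.
  by case: (i =P r) => [-> | _] /=; [exact: xr | apply: xQ].
- split; last by have := xQr r; rewrite in_setU1 eqxx set_coordE eqxx.
  apply/forallP => i; apply/implyP => iQ.
  have := xQr i; rewrite in_setU1 iQ orbT set_coordE /=.
  by case: (i =P r) => [ir | //]; move: rQ; rewrite -ir iQ.
Qed.

Lemma cube_from_half (Q : {set 'I_n}) (b : {ffun 'I_n -> bool}) c :
  r \notin Q -> cube Q b = [set x | set_coord c x \in cube Q b :&: half c].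
Proof.
move=> rQ; apply/setP => x.
rewrite [RHS]inE in_setI mem_cube_set_coord //.
by rewrite [set_coord c x \in _]inE set_coordE !eqxx andbT.
Qed.

Lemma subcube_straddling {q C c} :
  is_subcube q C -> ~~ (C \subset half c) -> ~~ (C \subset half (~~ c)) ->
  exists (Q : {set 'I_n}) (b : {ffun 'I_n -> bool}),
    [/\ r \notin Q, #|Q| = n - q & C = cube Q b].
Proof.
rewrite /is_subcube => /existsP[Q /existsP[b /andP[/eqP cardQ /eqP ->]]].
move=> notc notnc; exists Q, b; split=> //.
apply/negP => /(@cube_sub_half _ b) sub.
by case: (b r) c sub notc notnc => [] [] ->.
Qed.

Lemma subcubeI_half q C c :
  0 < q <= n -> is_subcube q C -> ~~ (C \subset half c) ->
  ~~ (C \subset half (~~ c)) -> is_subcube q.-1 (C :&: half c).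
Proof.
move=> /andP[q_gt0 q_le_n] Cq notc notnc.
have [Q [b [rQ cardQ ->]]] := subcube_straddling Cq notc notnc.
apply/existsP; exists (r |: Q); apply/existsP; exists (set_coord c b).
by rewrite cubeI_half // cardsU1 rQ cardQ eqxx andbT; apply/eqP; lia.
Qed.

Lemma card_straddling_le q (S : {set Bn n}) c :
  0 < q <= n ->
  #|straddling q S c| <= #|subcubes q.-1 (S :&: half c)|.
Proof.
move=> qn; set A := straddling q S c.
have recover C : C \in A -> C = [set x | set_coord c x \in C :&: half c].
  rewrite !inE => /andP[/andP[Cq _] /andP[notc notnc]].
  have [Q [b [rQ _ ->]]] := subcube_straddling Cq notc notnc.
  exact: cube_from_half.
have f_inj : {in A &, injective (fun C => C :&: half c)}.
  by move=> C1 C2 /recover eC1 /recover eC2 eqI; rewrite eC1 eC2 eqI.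
rewrite -(card_in_imset f_inj).
apply/subset_leq_card/subsetP => _ /imsetP[C CA ->].
move: CA; rewrite !inE => /andP[/andP[Cq CS] /andP[notc notnc]].
by rewrite subcubeI_half // setSI.
Qed.

End CoordinateSlices.

Theorem mainTheorem3 (n : nat) (q : nat) (S : {set Bn n}) (r : 'I_n) (b : bool) :
  1 <= n -> 1 <= q -> q <= n ->
  1 <= #|slice S r b| -> #|slice S r b| <= #|slice S r (~~ b)| ->
  m q S <= m q (slice S r (~~ b)) + m q (slice S r b) + m q.-1 (slice S r b).
Proof.
move=> _ q_gt0 q_le_n _ _.
rewrite /m -!/(subcubes _ _) !sliceE.
have cover : subcubes q S \subset
    subcubes q (S :&: half r (~~ b)) :|: subcubes q (S :&: half r b)
      :|: straddling r q S b.
  apply/subsetP => C; rewrite !inE !subsetI => /andP[-> ->] /=.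
  by case: (C \subset half r b); case: (C \subset half r (~~ b)); rewrite ?orbT.
apply: leq_trans (subset_leq_card cover) _.
apply: leq_trans (leq_card_setU _ _) (leq_add _ _).
- exact: leq_card_setU.
- by apply: card_straddling_le; rewrite q_gt0.
Qed.
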